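(* For all $\mu\in{\cal S}$, $$\langle{\cal F}_{\rm A}(\mu)\rangle=\langle\mu\rangle^2\qquad\text{and}\qquad\langle{\cal F}_{\rm b}(\mu)\rangle\leq2\langle\mu\rangle,$$ and consequently $$\langle{\cal F}(\mu)\rangle\leq4\langle\mu\rangle^2\qquad\text{and}\qquad\langle\widehat{\cal F}(\mu)\rangle\leq2\langle\mu\rangle^2.$$
   Context: **Spaces.** $S=\{0,1\}^{\mathbb N}$ with $\mathbb N=\{0,1,\dots\}$. ${\cal M}$ is the set of probability laws on $S$, and ${\cal S}\subset{\cal M}$ the shift-invariant (stationary) laws. For $\mu\in{\cal S}$, $\langle\mu\rangle:=\int\mu(dy)\,y(i)$, which does not depend on $i$. **Column maps.** $\Phi_{\rm A}(y,z)(k)=y(k)\wedge z(k)$ and $\Phi_{\rm b}(y)(k)=y(k)\vee y(k+1)$. ${\cal F}_{\rm A}(\mu)$ is the law of $\Phi_{\rm A}(Y,Z)$ and ${\cal F}_{\rm b}(\mu)$ the law of $\Phi_{\rm b}(Y)$, with $Y,Z$ independent of law $\mu$. ${\cal F}={\cal F}_{\rm A}\circ{\cal F}_{\rm b}$ and $\widehat{\cal F}={\cal F}_{\rm b}\circ{\cal F}_{\rm A}$; these maps send ${\cal S}$ into ${\cal S}$. *)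

From HB Require Import structures.
From mathcomp Require Import all_boot all_order all_algebra.
From mathcomp Require Import all_classical all_reals all_analysis.

Set Implicit Arguments.
Unset Strict Implicit.
Unset Printing Implicit Defensive.
Import Order.TTheory GRing.Theory Num.Theory.
Local Open Scope classical_set_scope.
Local Open Scope ring_scope.

(* Cylinder generators: the sets {y | y i = b}.  The product sigma-algebra on
   {0,1}^N is the sigma-algebra generated by them. *)
Definition cyl : set (set (nat -> bool)) :=
  [set A | exists (i : nat) (b : bool), A = [set y : nat -> bool | y i = b]].

Definition S := g_sigma_algebraType cyl.

Definition shift (y : S) : S := fun k => y k.+1.

Definition stationary (R : realType) (mu : probability S R) : Prop :=
  forall A : set S, measurable A -> mu (shift @^-1` A) = mu A.

Definition mean (R : realType) (mu : set S -> \bar R) : \bar R :=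
  (\int[mu]_(y in [set: S]) ((y 0%N)%:R)%:E)%E.

Definition PhiA (yz : S * S) : S := fun k => yz.1 k && yz.2 k.
Definition Phib (y : S) : S := fun k => y k || y k.+1.

(* F_A(mu) = law of PhiA(Y,Z), Y, Z independent with law mu:
   the pushforward of the product law mu x mu under PhiA. *)
Definition FA (R : realType) (mu : set S -> \bar R) : set S -> \bar R :=
  pushforward (mu \x mu)%E PhiA.
Definition Fb (R : realType) (mu : set S -> \bar R) : set S -> \bar R :=
  pushforward mu Phib.

Definition FF (R : realType) (mu : set S -> \bar R) := FA (Fb mu).
Definition FFhat (R : realType) (mu : set S -> \bar R) := Fb (FA mu).

From HB Require Import structures.
From mathcomp Require Import all_boot all_order all_algebra.
From mathcomp Require Import all_classical all_reals all_analysis.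
Import Order.TTheory GRing.Theory Num.Theory.
Local Open Scope classical_set_scope.
Local Open Scope ereal_scope.

(* Configurations are 0/1-valued, so the mean of a law is the probability [p]
   that site 0 is occupied, and stationarity makes site 1 occupied with the
   same probability.  Site 0 of [PhiA (Y, Z)] is occupied iff it is occupied
   in both independent copies, giving [p^2]; site 0 of [Phib Y] is occupied
   iff site 0 or site 1 of [Y] is, which by subadditivity has probability at
   most [2p].  The bounds for the composites follow by chaining these facts,
   since [FA mu] again gives sites 0 and 1 the same probability. *)

Definition occupied (i : nat) : set S := [set y : S | y i].

Lemma measurable_occupied i : measurable (occupied i).
Proof. by apply: sub_sigma_algebra; exists i, true. Qed.

Lemma measurable_fun_S d (T : measurableType d) (f : T -> S) :
  (forall i, measurable (f @^-1` occupied i)) -> measurable_fun [set: T] f.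
Proof.
move=> mf; apply: (@measurability _ _ T S _ f cyl) => //.
move=> _ [_ [i [[] ->]] <-]; rewrite setTI; first exact: mf.
have -> : f @^-1` [set y : S | y i = false] = ~` (f @^-1` occupied i).
  by apply/seteqP; split=> x; rewrite /= /occupied /=; case: (f x i).
exact/measurableC/mf.
Qed.

Lemma PhiA_preimage_occupied i :
  PhiA @^-1` occupied i = occupied i `*` occupied i.
Proof.
by apply/seteqP; split=> -[y z]; rewrite /= /occupied /PhiA /=;
  [move/andP | move=> [-> ->]].
Qed.

Lemma Phib_preimage_occupied i :
  Phib @^-1` occupied i = occupied i `|` occupied i.+1.
Proof.
by apply/seteqP; split=> y; rewrite /= /occupied /Phib /=;
  [move/orP | case=> ->; rewrite ?orbT].
Qed.

Lemma measurable_PhiA : measurable_fun [set: S * S] PhiA.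
Proof.
apply: measurable_fun_S => i; rewrite PhiA_preimage_occupied.
exact: measurableX (measurable_occupied i) (measurable_occupied i).
Qed.

Lemma measurable_Phib : measurable_fun [set: S] Phib.
Proof.
apply: measurable_fun_S => i; rewrite Phib_preimage_occupied.
exact: measurableU (measurable_occupied i) (measurable_occupied i.+1).
Qed.

HB.instance Definition _ := isMeasurableFun.Build _ _ _ _ PhiA measurable_PhiA.
HB.instance Definition _ := isMeasurableFun.Build _ _ _ _ Phib measurable_Phib.

Section means.
Context {R : realType}.

Lemma stationary_occupied (mu : probability S R) i :
  stationary mu -> mu (occupied i.+1) = mu (occupied i).
Proof. by move=> hmu; rewrite -(hmu _ (measurable_occupied i)). Qed.

Lemma mean_occupied (m : measure S R) : mean m = m (occupied 0).
Proof.
rewrite /mean (eq_integral (fun y => (\1_(occupied 0) y)%:E)).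
  by rewrite integral_indic ?setIT //; exact: measurable_occupied.
by move=> y _; rewrite indicE; case: (boolP (y 0%N)) => y0;
  [rewrite mem_set | rewrite memNset //; apply/negP].
Qed.

Lemma FA_occupied (mu : probability S R) i :
  FA mu (occupied i) = mu (occupied i) * mu (occupied i).
Proof.
rewrite /FA /pushforward PhiA_preimage_occupied.
by apply: product_measure1E; exact: measurable_occupied.
Qed.

Lemma mean_FA (mu : probability S R) :
  mean (FA mu) = mean mu * mean mu.
Proof.
rewrite (mean_occupied (distribution (mu \x mu) PhiA)) mean_occupied.
exact: FA_occupied.
Qed.

Lemma Fb_occupied_le (m : measure S R) i :
  Fb m (occupied i) <= m (occupied i) + m (occupied i.+1).
Proof.
rewrite /Fb /pushforward Phib_preimage_occupied.
by apply: measureU2; exact: measurable_occupied.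
Qed.

Lemma mean_Fb_le (mu : probability S R) :
  mu (occupied 1) = mu (occupied 0) -> mean (Fb mu) <= 2%:E * mean mu.
Proof.
move=> occ1; rewrite (mean_occupied (distribution mu Phib)) mean_occupied.
by rewrite mule_natl mule2n -[X in _ + X]occ1; exact: Fb_occupied_le.
Qed.

End means.

Theorem lemma18 (R : realType) (mu : probability S R) (hmu : stationary mu) :
  [/\ mean (FA mu) = mean mu * mean mu,
      mean (Fb mu) <= 2%:E * mean mu,
      mean (FF mu) <= 4%:E * (mean mu * mean mu)
    & mean (FFhat mu) <= 2%:E * (mean mu * mean mu)].
Proof.
have occ1 : mu (occupied 1) = mu (occupied 0) by exact: stationary_occupied.
have Fb_le := mean_Fb_le mu occ1.
have FA_occ1 : FA mu (occupied 1) = FA mu (occupied 0).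
  by rewrite !FA_occupied occ1.
split.
- exact: mean_FA.
- exact: Fb_le.
- rewrite [mean (FF mu)](mean_FA (distribution mu Phib)).
  have -> : 4%:E = 2%:E * 2%:E :> \bar R by rewrite -EFinM -natrM.
  rewrite muleACA; apply: lee_pmul => //;
    by rewrite mean_occupied; exact: measure_ge0.
- rewrite -mean_FA; exact: (mean_Fb_le (distribution (mu \x mu) PhiA) FA_occ1).
Qed.
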